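(* (i) $A\vdash_{\mathbf{RJ}}B$ iff $A\vdash B$ is true in all RJ-models. (ii) $A\vdash_{\mathbf{RC}}B$ iff $A\vdash B$ is true in all RC-models. (iii) $A\vdash_{\mathbf{RC\omega}}B$ iff $A\vdash B$ is true in all persistent RC-models.
   Context: Strictly positive formulas: $A::= p\mid \top\mid (A\land B)\mid \alpha A$, $\alpha\le\omega$. $\mathbf{RJ}$: $A\vdash A$; $A\vdash\top$; cut; $A\land B\vdash A$; $A\land B\vdash B$; from $A\vdash B$, $A\vdash C$ infer $A\vdash B\land C$; from $A\vdash B$ infer $\alpha A\vdash\alpha B$; $\alpha\alpha A\vdash\alpha A$; $\alpha\beta A\vdash\beta A$, $\beta\alpha A\vdash\beta A$ for $\alpha\ge\beta$; $\alpha A\land\beta B\vdash\alpha(A\land\beta B)$ for $\alpha>\beta$. $\mathbf{RC}=\mathbf{RJ}+\{\alpha A\vdash\beta A:\alpha>\beta\}$; $\mathbf{RC\omega}=\mathbf{RC}+\{\omega A\vdash A\}$. A Kripke model for signature $S\subseteq\{0,1,\dots,\omega\}$ is a nonempty set $W$ with relations $(R_\alpha)_{\alpha\in S}$ and a valuation of variables; $x\Vdash\top$; $x\Vdash A\land B$ iff both; $x\Vdash\alpha A$ iff $\exists y(xR_\alpha y\wedge y\Vdash A)$. An RJ$_S$-frame satisfies $R_\alpha R_\beta\subseteq R_{\min(\alpha,\beta)}$ (i.e. $xR_\alpha yR_\beta z\Rightarrow xR_{\min(\alpha,\beta)}z$) for all $\alpha,\beta\in S$, and, for $\alpha>\beta$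 in $S$, $xR_\alpha y$ and $xR_\beta z$ imply $yR_\beta z$. An RC$_S$-frame is an RJ$_S$-frame with $R_\alpha\subseteq R_\beta$ for $\beta<\alpha$ in $S$. RJ-/RC-models are those with $S=\{0,1,\dots,\omega\}$. A model is persistent if $x\Vdash p$ and $yR_\omega x$ imply $y\Vdash p$ for each variable $p$. A sequent $A\vdash B$ is true in a model if every node forcing $A$ forces $B$. *)

From Stdlib Require Import Arith.

(* Modality indices: ordinals α ≤ ω, i.e. 0,1,2,... and ω. *)
Inductive idx : Type := Fin (n : nat) | Om.

Definition idx_lt (a b : idx) : Prop :=
  match a, b with
  | Fin m, Fin n => m < n
  | Fin _, Om => True
  | Om, _ => False
  end.

Definition idx_le (a b : idx) : Prop := idx_lt a b \/ a = b.

Definition idx_min (a b : idx) : idx :=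
  match a, b with
  | Fin m, Fin n => Fin (Nat.min m n)
  | Fin m, Om => Fin m
  | Om, Fin n => Fin n
  | Om, Om => Om
  end.

Inductive fm : Type :=
| Var (p : nat)
| Top
| And (A B : fm)
| Dia (a : idx) (A : fm).

(* Derivability in RJ extended by extra axiom sequents Ax. *)
Inductive deriv (Ax : fm -> fm -> Prop) : fm -> fm -> Prop :=
| d_ax : forall A B, Ax A B -> deriv Ax A B
| d_id : forall A, deriv Ax A A
| d_top : forall A, deriv Ax A Top
| d_cut : forall A B C, deriv Ax A B -> deriv Ax B C -> deriv Ax A C
| d_andl : forall A B, deriv Ax (And A B) A
| d_andr : forall A B, deriv Ax (And A B) B
| d_andI : forall A B C, deriv Ax A B -> deriv Ax A C -> deriv Ax A (And B C)
| d_mono : forall a A B, deriv Ax A B -> deriv Ax (Dia a A) (Dia a B)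
| d_trans : forall a A, deriv Ax (Dia a (Dia a A)) (Dia a A)
| d_le1 : forall a b A, idx_le b a -> deriv Ax (Dia a (Dia b A)) (Dia b A)
| d_le2 : forall a b A, idx_le b a -> deriv Ax (Dia b (Dia a A)) (Dia b A)
| d_J : forall a b A B, idx_lt b a ->
    deriv Ax (And (Dia a A) (Dia b B)) (Dia a (And A (Dia b B))).

Definition noAx (A B : fm) : Prop := False.

Definition RC_ax (A B : fm) : Prop :=
  exists a b C, idx_lt b a /\ A = Dia a C /\ B = Dia b C.

Definition RCw_ax (A B : fm) : Prop :=
  RC_ax A B \/ (exists C, A = Dia Om C /\ B = C).

Definition der_RJ := deriv noAx.
Definition der_RC := deriv RC_ax.
Definition der_RCw := deriv RCw_ax.

Fixpoint forces {W : Type} (R : idx -> W -> W -> Prop) (V : nat -> W -> Prop)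
  (x : W) (A : fm) : Prop :=
  match A with
  | Var p => V p x
  | Top => True
  | And B C => forces R V x B /\ forces R V x C
  | Dia a B => exists y, R a x y /\ forces R V y B
  end.

Definition RJ_frame {W : Type} (R : idx -> W -> W -> Prop) : Prop :=
  (forall a b x y z, R a x y -> R b y z -> R (idx_min a b) x z) /\
  (forall a b x y z, idx_lt b a -> R a x y -> R b x z -> R b y z).

Definition RC_frame {W : Type} (R : idx -> W -> W -> Prop) : Prop :=
  RJ_frame R /\ (forall a b x y, idx_lt b a -> R a x y -> R b x y).

Definition persistent {W : Type} (R : idx -> W -> W -> Prop) (V : nat -> W -> Prop) : Prop :=
  forall p x y, V p x -> R Om y x -> V p y.

Definition true_in {W : Type} (R : idx -> W -> W -> Prop) (V : nat -> W -> Prop)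
  (A B : fm) : Prop :=
  forall x, forces R V x A -> forces R V x B.

From Stdlib Require Import Arith Lia.

(* Soundness is proved once for RJ extended by an arbitrary set of extra axiom
   sequents: every RJ rule is valid on RJ-frames, the compositions
   Dia a (Dia b A) |- Dia (min a b) A being handled uniformly.  The extra
   axioms of RC are valid on RC-frames, and ωA |- A is valid on persistent
   models because forcing of any formula is inherited backwards along R_ω.

   Completeness uses one canonical model, again parametric in the extra
   axioms: worlds are theories (sets of formulas containing Top, closed under
   conjunction and derivability), T R_a U holds when Dia a F ∈ T for all F ∈ U
   and U contains every Dia b E ∈ T with b < a.  The key step (truth lemma) is
   the construction of a witness world for Dia a A ∈ T, namely the theory
   generated by A together with the formulas Dia b E ∈ T with b < a; the
   J-axiom ensures Dia a (A ∧ G) ∈ T for every conjunction G of them.  The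
   canonical frame is always an RJ-frame, an RC-frame when the RC axioms are
   present, and persistent when ωA |- A is.  A non-derivable sequent A |- B
   fails at the principal theory of A. *)

Lemma idx_lt_trans a b c : idx_lt a b -> idx_lt b c -> idx_lt a c.
Proof. destruct a, b, c; simpl; intros; auto; lia. Qed.

Lemma idx_lt_min a b c : idx_lt c (idx_min a b) -> idx_lt c a /\ idx_lt c b.
Proof. destruct a, b, c; simpl; intros; auto; lia. Qed.

Lemma idx_le_total a b : idx_le a b \/ idx_le b a.
Proof.
  unfold idx_le; destruct a as [m|], b as [n|]; simpl; auto.
  destruct (lt_eq_lt_dec m n) as [[H|H]|H]; subst; auto.
Qed.

Lemma idx_min_id a : idx_min a a = a.
Proof. destruct a; simpl; [rewrite Nat.min_id|]; reflexivity. Qed.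

Lemma idx_min_le_l a b : idx_le b a -> idx_min a b = b.
Proof.
  unfold idx_le; destruct a, b; simpl; intros [H|H];
    try discriminate; try contradiction; try injection H as ->;
    f_equal; auto using Nat.min_id, Nat.min_r, Nat.min_l, Nat.lt_le_incl.
Qed.

Lemma idx_min_le_r a b : idx_le b a -> idx_min b a = b.
Proof.
  unfold idx_le; destruct a, b; simpl; intros [H|H];
    try discriminate; try contradiction; try injection H as ->;
    f_equal; auto using Nat.min_id, Nat.min_r, Nat.min_l, Nat.lt_le_incl.
Qed.

Section DerivedRules.
Variable Ax : fm -> fm -> Prop.

Lemma d_min a b A : deriv Ax (Dia a (Dia b A)) (Dia (idx_min a b) A).
Proof.
  destruct (idx_le_total a b) as [H|H].
  - rewrite (idx_min_le_r b a H). apply d_le2, H.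
  - rewrite (idx_min_le_l a b H). apply d_le1, H.
Qed.

Lemma d_and_top A : deriv Ax A (And A Top).
Proof. apply d_andI; [apply d_id | apply d_top]. Qed.

Lemma d_and_mono A A' B B' :
  deriv Ax A A' -> deriv Ax B B' -> deriv Ax (And A B) (And A' B').
Proof.
  intros HA HB. apply d_andI.
  - exact (d_cut _ _ _ _ (d_andl _ _ _) HA).
  - exact (d_cut _ _ _ _ (d_andr _ _ _) HB).
Qed.

Lemma d_and_assoc A B C : deriv Ax (And (And A B) C) (And A (And B C)).
Proof.
  apply d_andI; [|apply d_and_mono; [apply d_andr | apply d_id]].
  eapply d_cut; apply d_andl.
Qed.

End DerivedRules.

Section Soundness.
Variable W : Type.
Variable R : idx -> W -> W -> Prop.
Variable V : nat -> W -> Prop.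
Hypothesis frame : RJ_frame R.

(* The semantic counterpart of d_min: R_a ∘ R_b ⊆ R_(min a b). *)
Lemma forces_dia_dia a b A x :
  forces R V x (Dia a (Dia b A)) -> forces R V x (Dia (idx_min a b) A).
Proof.
  intros [y [Hxy [z [Hyz Hz]]]]. exists z; split; [|exact Hz].
  exact (proj1 frame _ _ _ _ _ Hxy Hyz).
Qed.

Lemma sound (Ax : fm -> fm -> Prop) :
  (forall A B, Ax A B -> true_in R V A B) ->
  forall A B, deriv Ax A B -> true_in R V A B.
Proof.
  intros HAx A B D. induction D; intros x Hx; simpl in *.
  - exact (HAx _ _ H x Hx).
  - exact Hx.
  - exact I.
  - auto.
  - apply Hx.
  - apply Hx.
  - auto.
  - destruct Hx as [y [Hxy Hy]]. exists y; auto.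
  - rewrite <- (idx_min_id a). exact (forces_dia_dia _ _ _ _ Hx).
  - rewrite <- (idx_min_le_l a b H). exact (forces_dia_dia _ _ _ _ Hx).
  - rewrite <- (idx_min_le_r a b H). exact (forces_dia_dia _ _ _ _ Hx).
  - destruct Hx as [[y [Hxy Hy]] [z [Hxz Hz]]].
    exists y; repeat split; auto. exists z; split; auto.
    exact (proj2 frame _ _ _ _ _ H Hxy Hxz).
Qed.

Lemma RC_ax_valid :
  (forall a b x y, idx_lt b a -> R a x y -> R b x y) ->
  forall A B, RC_ax A B -> true_in R V A B.
Proof.
  intros Hincl A B [a [b [C [Hab [-> ->]]]]] x [y [Hxy Hy]].
  exists y; eauto.
Qed.

Lemma persistent_forces :
  persistent R V -> forall A x y, R Om x y -> forces R V y A -> forces R V x A.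
Proof.
  intros Hpers A. induction A as [p| |A1 IH1 A2 IH2|a A IH];
    simpl; intros x y Hxy Hy.
  - exact (Hpers _ _ _ Hy Hxy).
  - exact I.
  - destruct Hy; split; eauto.
  - destruct Hy as [z [Hyz Hz]]. exists z; split; [|exact Hz].
    pose proof (proj1 frame _ _ _ _ _ Hxy Hyz) as Hxz.
    destruct a; exact Hxz.
Qed.

Lemma RCw_ax_valid :
  (forall a b x y, idx_lt b a -> R a x y -> R b x y) -> persistent R V ->
  forall A B, RCw_ax A B -> true_in R V A B.
Proof.
  intros Hincl Hpers A B [HRC | [C [-> ->]]].
  - exact (RC_ax_valid Hincl A B HRC).
  - intros x [y [Hxy Hy]]. exact (persistent_forces Hpers _ _ _ Hxy Hy).
Qed.

End Soundness.

Section Canonical.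
Variable Ax : fm -> fm -> Prop.

Record theory : Type := {
  mem :> fm -> Prop;
  mem_top : mem Top;
  mem_and : forall F G, mem F -> mem G -> mem (And F G);
  mem_der : forall F G, mem F -> deriv Ax F G -> mem G
}.

Definition CR (a : idx) (T U : theory) : Prop :=
  (forall F, U F -> T (Dia a F)) /\
  (forall b E, idx_lt b a -> T (Dia b E) -> U (Dia b E)).

Definition CV (p : nat) (T : theory) : Prop := T (Var p).

(* Conjunctions of formulas Dia b E ∈ T with b < a: exactly what a witness
   for Dia a A ∈ T must contain besides A. *)
Inductive below (T : fm -> Prop) (a : idx) : fm -> Prop :=
| below_top : below T a Top
| below_dia : forall b E, idx_lt b a -> T (Dia b E) -> below T a (Dia b E)
| below_and : forall G1 G2, below T a G1 -> below T a G2 -> below T a (And G1 G2).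

(* Iterating the J-axiom. *)
Lemma dia_and_below (T : theory) a G :
  below T a G -> forall A, T (Dia a A) -> T (Dia a (And A G)).
Proof.
  induction 1 as [|b E Hba HE|G1 G2 _ IH1 _ IH2]; intros A HA.
  - exact (mem_der T _ _ HA (d_mono _ _ _ _ (d_and_top _ _))).
  - exact (mem_der T _ _ (mem_and T _ _ HA HE) (d_J _ _ _ _ _ Hba)).
  - apply (mem_der T _ _ (IH2 _ (IH1 _ HA))), d_mono, d_and_assoc.
Qed.

Definition witness (T : theory) (a : idx) (A : fm) : fm -> Prop :=
  fun F => exists G, below T a G /\ deriv Ax (And A G) F.

Lemma witness_theory (T : theory) a A :
  { U : theory | forall F, U F <-> witness T a A F }.
Proof.
  unshelve eexists (Build_theory (witness T a A) _ _ _); [| | | reflexivity].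
  - exists Top. split; [constructor | apply d_top].
  - intros F1 F2 [G1 [HG1 D1]] [G2 [HG2 D2]].
    exists (And G1 G2). split; [constructor; assumption|].
    apply d_andI.
    + eapply d_cut; [|exact D1]. apply d_and_mono; [apply d_id | apply d_andl].
    + eapply d_cut; [|exact D2]. apply d_and_mono; [apply d_id | apply d_andr].
  - intros F1 F2 [G [HG D]] D'. exists G. split; [exact HG | eapply d_cut; eauto].
Defined.

Lemma canon_witness (T : theory) a A :
  T (Dia a A) -> exists U, CR a T U /\ U A.
Proof.
  intros HA. destruct (witness_theory T a A) as [U HU].
  exists U. repeat split.
  - intros F [G [HG D]]%HU.
    exact (mem_der T _ _ (dia_and_below T a G HG A HA) (d_mono _ _ _ _ D)).
  - intros b E Hba HE. apply HU.
    exists (Dia b E). split; [constructor; assumption | apply d_andr].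
  - apply HU. exists Top. split; [constructor | apply d_andl].
Qed.

Lemma canon_truth A : forall T : theory, forces CR CV T A <-> T A.
Proof.
  induction A as [p| |A1 IH1 A2 IH2|a A IH]; intros T; simpl.
  - reflexivity.
  - split; [intros _; apply mem_top | trivial].
  - rewrite IH1, IH2. split.
    + intros [H1 H2]. exact (mem_and T _ _ H1 H2).
    + intros H. split; eapply mem_der; eauto using d_andl, d_andr.
  - split.
    + intros [U [[HU _] HA]]. apply HU, IH, HA.
    + intros H. destruct (canon_witness T a A H) as [U [HR HU]].
      exists U. split; [exact HR | apply IH, HU].
Qed.

Lemma canon_RJ : RJ_frame CR.
Proof.
  split.
  - intros a b x y z [Hxy1 Hxy2] [Hyz1 Hyz2]. split.
    + intros F HF. exact (mem_der x _ _ (Hxy1 _ (Hyz1 _ HF)) (d_min _ a b F)).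
    + intros c E Hc HE. destruct (idx_lt_min a b c Hc) as [Hca Hcb].
      exact (Hyz2 _ _ Hcb (Hxy2 _ _ Hca HE)).
  - intros a b x y z Hba [Hxy1 Hxy2] [Hxz1 Hxz2]. split.
    + intros F HF. exact (Hxy2 _ _ Hba (Hxz1 _ HF)).
    + intros c E Hcb HE. apply (Hxz2 _ _ Hcb).
      apply (mem_der x _ _ (Hxy1 _ HE)), d_le1.
      left. exact (idx_lt_trans _ _ _ Hcb Hba).
Qed.

Lemma canon_RC :
  (forall a b C, idx_lt b a -> Ax (Dia a C) (Dia b C)) ->
  forall a b x y, idx_lt b a -> CR a x y -> CR b x y.
Proof.
  intros HAx a b x y Hba [Hxy1 Hxy2]. split.
  - intros F HF. exact (mem_der x _ _ (Hxy1 _ HF) (d_ax _ _ _ (HAx _ _ F Hba))).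
  - intros c E Hcb. apply Hxy2. exact (idx_lt_trans _ _ _ Hcb Hba).
Qed.

Lemma canon_persistent : (forall C, Ax (Dia Om C) C) -> persistent CR CV.
Proof.
  intros HAx p x y Hx [Hyx _].
  exact (mem_der y _ _ (Hyx _ Hx) (d_ax _ _ _ (HAx (Var p)))).
Qed.

Definition principal (A : fm) : theory.
Proof.
  refine (Build_theory (deriv Ax A) _ _ _).
  - apply d_top.
  - intros; apply d_andI; assumption.
  - intros; eapply d_cut; eassumption.
Defined.

Lemma canon_complete A B : true_in CR CV A B -> deriv Ax A B.
Proof.
  intros H. apply (canon_truth B (principal A)), H, (canon_truth A (principal A)).
  apply d_id.
Qed.

End Canonical.

Theorem theorem4p1 :
  forall A B : fm,
    (der_RJ A B <->
       forall (W : Type) (R : idx -> W -> W -> Prop) (V : nat -> W -> Prop),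
         inhabited W -> RJ_frame R -> true_in R V A B) /\
    (der_RC A B <->
       forall (W : Type) (R : idx -> W -> W -> Prop) (V : nat -> W -> Prop),
         inhabited W -> RC_frame R -> true_in R V A B) /\
    (der_RCw A B <->
       forall (W : Type) (R : idx -> W -> W -> Prop) (V : nat -> W -> Prop),
         inhabited W -> RC_frame R -> persistent R V -> true_in R V A B).
Proof.
  intros A B. split; [|split]; split.
  - intros D W R V _ HF. exact (sound W R V HF noAx (fun _ _ H => False_ind _ H) A B D).
  - intros H. apply canon_complete, H; [constructor; exact (principal noAx A) | apply canon_RJ].
  - intros D W R V _ [HF Hincl]. exact (sound W R V HF RC_ax (RC_ax_valid W R V Hincl) A B D).
  - intros H. apply canon_complete, H; [constructor; exact (principal RC_ax A)|].
    split; [apply canon_RJ | apply canon_RC].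
    intros a b C Hba. exists a, b, C; auto.
  - intros D W R V _ [HF Hincl] Hpers.
    exact (sound W R V HF RCw_ax (RCw_ax_valid W R V HF Hincl Hpers) A B D).
  - intros H. apply canon_complete, H; [constructor; exact (principal RCw_ax A)| |].
    + split; [apply canon_RJ | apply canon_RC].
      intros a b C Hba. left. exists a, b, C; auto.
    + apply canon_persistent. intros C. right. exists C; auto.
Qed.
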